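(* Let $(G,\cdot)$ be a group, $\epsilon\in\{1,-1\}$, and $\psi_1,\psi_2\in\operatorname{End}(G,\cdot)$. Suppose either $\epsilon=-1$ and both $\psi_i$ satisfy $\psi_i([[G,\psi_i],G])\le Z(G,\cdot)$, or $\epsilon=1$ and both $\psi_i$ satisfy $\psi_i([\psi_i(G),G])\le Z(G,\cdot)$. For $i=1,2$ let $N_i=\{h\mapsto g\cdot\psi_i(g)^{\epsilon}\cdot h\cdot\psi_i(g)^{-\epsilon} : g\in G\}\subseteq\operatorname{Perm}(G)$ (a regular subgroup under these hypotheses). Then $N_1=N_2$ if and only if $\psi_1(g)\cdot\psi_2(g)^{-1}\in Z(G,\cdot)$ for every $g\in G$.
   Context: $\operatorname{Perm}(G)$ is the group of permutations of the set $G$. For $\psi\in\operatorname{End}(G,\cdot)$, $[g,\psi]=g\cdot\psi(g)^{-1}$ and $[G,\psi]$ is the subgroup generated by these elements. Commutators are $[x,y]=xyx^{-1}y^{-1}$ and $[A,B]$ is the subgroup generated by $[a,b]$, $a\in A$, $b\in B$. $Z(G,\cdot)$ is the centre. *)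

From Stdlib Require Import ZArith.
Set Implicit Arguments.

Section GroupDefs.
Variable G : Type.
Variable mul : G -> G -> G.
Variable one : G.
Variable inv : G -> G.

Definition is_group : Prop :=
  (forall x y z, mul x (mul y z) = mul (mul x y) z) /\
  (forall x, mul one x = x) /\ (forall x, mul x one = x) /\
  (forall x, mul (inv x) x = one) /\ (forall x, mul x (inv x) = one).

Definition is_endo (psi : G -> G) : Prop :=
  forall x y, psi (mul x y) = mul (psi x) (psi y).

Definition is_subgroup (H : G -> Prop) : Prop :=
  H one /\ (forall x y, H x -> H y -> H (mul x y)) /\ (forall x, H x -> H (inv x)).

Definition gen (S : G -> Prop) : G -> Prop :=
  fun x => forall H, is_subgroup H -> (forall s, S s -> H s) -> H x.

Definition center : G -> Prop := fun z => forall y, mul z y = mul y z.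

Definition comm (x y : G) : G := mul (mul (mul x y) (inv x)) (inv y).

Definition comm_sub (A B : G -> Prop) : G -> Prop :=
  gen (fun x => exists a b, A a /\ B b /\ x = comm a b).

Definition setT : G -> Prop := fun _ => True.

Definition G_psi (psi : G -> G) : G -> Prop :=
  gen (fun x => exists g, x = mul g (inv (psi g))).

Definition image (psi : G -> G) (A : G -> Prop) : G -> Prop :=
  fun x => exists a, A a /\ x = psi a.

Definition image_in_center (psi : G -> G) (A : G -> Prop) : Prop :=
  forall a, A a -> center (psi a).

Definition cond_minus (psi : G -> G) : Prop :=
  image_in_center psi (comm_sub (G_psi psi) setT).

Definition cond_plus (psi : G -> G) : Prop :=
  image_in_center psi (comm_sub (image psi setT) setT).

Definition epow (eps : Z) (x : G) : G := if Z.eqb eps 1 then x else inv x.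

Definition Nset (eps : Z) (psi : G -> G) : (G -> G) -> Prop :=
  fun f => exists g, f = (fun h => mul (mul (mul g (epow eps (psi g))) h)
                                     (inv (epow eps (psi g)))).
End GroupDefs.

(* Every element of N_psi has the form  t_{g,a} : h |-> (g a) h a^-1  with
   a = psi(g)^eps, and t_{g,a}(1) = g, so the twist a is the only freedom:
   - t_{g,a} determines g (evaluate at 1);
   - t_{g,a1} = t_{g,a2} iff a2^-1 a1 is central.
   Hence, for ANY two twist functions a_1, a_2 : G -> G, the sets
   { t_{g, a_1 g} } and { t_{g, a_2 g} } coincide iff a_2(g)^-1 a_1(g) is
   central for all g.  For a_i(g) = psi_i(g)^eps the last condition is
   equivalent to psi_1(g) psi_2(g)^-1 being central, for both signs eps.
   The endomorphism and commutator hypotheses of the theorem only ensure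
   that N_i is a regular subgroup; the criterion itself does not need them. *)
From Stdlib Require Import ZArith FunctionalExtensionality.
Set Implicit Arguments.

Section TwistedTranslations.
Variable G : Type.
Variable mul : G -> G -> G.
Variable one : G.
Variable inv : G -> G.
Hypothesis HG : is_group mul one inv.

Let assoc : forall x y z, mul x (mul y z) = mul (mul x y) z.
Proof. apply HG. Qed.
Let lid : forall x, mul one x = x. Proof. apply HG. Qed.
Let rid : forall x, mul x one = x. Proof. apply HG. Qed.
Let linv : forall x, mul (inv x) x = one. Proof. apply HG. Qed.
Let rinv : forall x, mul x (inv x) = one. Proof. apply HG. Qed.

Lemma mul_cancel_l (a x y : G) : mul a x = mul a y -> x = y.
Proof.
  intros H.
  rewrite <- (lid x), <- (lid y), <- (linv a), <- !assoc, H. reflexivity.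
Qed.

Lemma inv_involutive (x : G) : inv (inv x) = x.
Proof. apply (mul_cancel_l (a := inv x)). rewrite rinv, linv. reflexivity. Qed.

Lemma inv_mul_inv (x y : G) : inv (mul x (inv y)) = mul y (inv x).
Proof.
  apply (mul_cancel_l (a := mul x (inv y))).
  rewrite rinv, <- assoc, (assoc (inv y)), linv, lid, rinv. reflexivity.
Qed.

Lemma conj_center (y z : G) : center mul z -> mul (mul y z) (inv y) = z.
Proof. intros Hz. rewrite <- (Hz y), <- assoc, rinv, rid. reflexivity. Qed.

Lemma center_inv (z : G) : center mul z -> center mul (inv z).
Proof.
  intros Hz y. apply (mul_cancel_l (a := z)).
  rewrite assoc, rinv, lid, assoc, Hz, <- assoc, rinv, rid. reflexivity.
Qed.

(* y^-1 x and x y^-1 are conjugate (by y), so one is central iff the other is. *)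
Lemma center_swap (x y : G) :
  center mul (mul (inv y) x) <-> center mul (mul x (inv y)).
Proof.
  split; intros Hz.
  - assert (E : mul x (inv y) = mul (mul y (mul (inv y) x)) (inv y)).
    { rewrite (assoc y), rinv, lid. reflexivity. }
    rewrite E, (conj_center y Hz). exact Hz.
  - assert (E : mul (inv y) x = mul (mul (inv y) (mul x (inv y))) (inv (inv y))).
    { rewrite inv_involutive, <- !assoc, linv, rid. reflexivity. }
    rewrite E, (conj_center (inv y) Hz). exact Hz.
Qed.

Definition twisted_translation (g a : G) : G -> G :=
  fun h => mul (mul (mul g a) h) (inv a).

Lemma twisted_translation_one (g a : G) : twisted_translation g a one = g.
Proof. unfold twisted_translation. rewrite rid, <- assoc, rinv, rid. reflexivity. Qed.

Lemma twisted_translation_eq_iff (g a1 a2 : G) :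
  twisted_translation g a1 = twisted_translation g a2 <->
  center mul (mul (inv a2) a1).
Proof.
  unfold twisted_translation. split.
  - intros E y.
    assert (Ey : mul (mul a1 y) (inv a1) = mul (mul a2 y) (inv a2)).
    { pose proof (equal_f E y) as Eg. cbv beta in Eg. rewrite <- !assoc in Eg.
      apply mul_cancel_l in Eg. rewrite !assoc in Eg. exact Eg. }
    transitivity (mul (inv a2) (mul (mul (mul a1 y) (inv a1)) a1)).
    + rewrite <- (assoc (mul a1 y)), linv, rid, assoc. reflexivity.
    + rewrite Ey, <- !assoc, (assoc (inv a2) a2), linv, lid. reflexivity.
  - intros Hz. apply functional_extensionality. intros h.
    assert (Ea1 : a1 = mul a2 (mul (inv a2) a1)).
    { rewrite assoc, rinv, lid. reflexivity. }
    rewrite Ea1 at 1. rewrite (assoc g), <- (assoc (mul g a2)), Hz.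
    rewrite !assoc, <- (assoc _ a1), rinv, rid. reflexivity.
Qed.

Definition twisted_set (a : G -> G) : (G -> G) -> Prop :=
  fun f => exists g, f = twisted_translation g (a g).

Lemma twisted_set_eq_iff (a1 a2 : G -> G) :
  (forall f, twisted_set a1 f <-> twisted_set a2 f) <->
  (forall g, center mul (mul (inv (a2 g)) (a1 g))).
Proof.
  split.
  - intros Heq g.
    destruct (proj1 (Heq _) (ex_intro _ g eq_refl)) as [g' E].
    assert (Eg : g = g').
    { rewrite <- (twisted_translation_one g (a1 g)), E.
      apply twisted_translation_one. }
    subst g'. exact (proj1 (twisted_translation_eq_iff _ _ _) E).
  - intros Hz f.
    assert (Et : forall g, twisted_translation g (a1 g) = twisted_translation g (a2 g)).
    { intros g. exact (proj2 (twisted_translation_eq_iff _ _ _) (Hz g)). }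
    split; intros [g ->]; exists g; [| symmetry]; apply Et.
Qed.

Lemma center_epow_quotient (eps : Z) (x1 x2 : G) :
  center mul (mul (inv (epow inv eps x2)) (epow inv eps x1)) <->
  center mul (mul x1 (inv x2)).
Proof.
  unfold epow. destruct (Z.eqb eps 1).
  - apply center_swap.
  - rewrite inv_involutive, <- inv_mul_inv. split.
    + intros Hz. rewrite <- (inv_involutive (mul x1 (inv x2))).
      apply center_inv, Hz.
    + apply center_inv.
Qed.

End TwistedTranslations.

Theorem mainTheorem3 (G : Type) (mul : G -> G -> G) (one : G) (inv : G -> G)
  (HG : is_group mul one inv) (eps : Z) (psi1 psi2 : G -> G)
  (Hpsi1 : is_endo mul psi1) (Hpsi2 : is_endo mul psi2)
  (Hcond : (eps = (-1)%Z /\ cond_minus mul one inv psi1 /\ cond_minus mul one inv psi2) \/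
           (eps = 1%Z /\ cond_plus mul one inv psi1 /\ cond_plus mul one inv psi2)) :
  (forall f : G -> G, Nset mul inv eps psi1 f <-> Nset mul inv eps psi2 f) <->
  (forall g : G, center mul (mul (psi1 g) (inv (psi2 g)))).
Proof.
  (* N_psi is, by definition, the twisted set for the twist g |-> psi(g)^eps. *)
  etransitivity.
  { exact (twisted_set_eq_iff HG (fun g => epow inv eps (psi1 g))
                                 (fun g => epow inv eps (psi2 g))). }
  split; intros Hz g; apply (center_epow_quotient HG eps), Hz.
Qed.
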